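(* Let $G$ be a graph with maximum degree $d\ge1$ and let $E$ be a finite subset of the edges of $G$. Then there is an ordering $e_1,e_2,\dots,e_{|E|}$ of the elements of $E$ such that the number of disconnected edges in this ordering is at least $\lfloor |E|/(2d)\rfloor$, where an edge $e_j$ is called disconnected if it shares no vertex with any of the edges $e_1,\dots,e_{j-1}$. *)

(* An edge {u,v} is represented by an (oriented) pair (u, v) with adj u v;
   (u,v) and (v,u) represent the same edge. *)
From mathcomp Require Import all_boot.
Set Implicit Arguments. Unset Strict Implicit. Unset Printing Implicit Defensive.

Section Defs.
Variable V : eqType.

Definition same_edge (e f : V * V) : bool :=
  (e == f) || (e == (f.2, f.1)).

Definition shares (e f : V * V) : bool :=
  [|| e.1 == f.1, e.1 == f.2, e.2 == f.1 | e.2 == f.2].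

Fixpoint ndisc_aux (pre s : seq (V * V)) : nat :=
  match s with
  | [::] => 0
  | e :: s' => (~~ has (shares e) pre) + ndisc_aux (rcons pre e) s'
  end.

Definition ndisc (o : seq (V * V)) : nat := ndisc_aux [::] o.
End Defs.

(* Greedily pick an edge e of E and discard the edges of E meeting it.  Since
   both endpoints of e have degree at most d and e itself meets both, fewer
   than 2d edges of E meet e, so the picked edges M form a matching with
   |E| <= 2d |M|.  Listing M first and the rest of E afterwards, every edge of
   M is disconnected. *)
From mathcomp Require Import all_boot.
From mathcomp Require Import zify.

Set Implicit Arguments. Unset Strict Implicit. Unset Printing Implicit Defensive.

Section Matchings.
Variable V : eqType.
Implicit Types (e f : V * V) (pre s t M : seq (V * V)).

Lemma shares_sym e f : shares e f = shares f e.
Proof.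
rewrite /shares (eq_sym e.1 f.1) (eq_sym e.1 f.2) (eq_sym e.2 f.1) (eq_sym e.2 f.2).
by case: (f.1 == e.2); case: (f.2 == e.1); rewrite ?orbT ?orbF.
Qed.

Lemma shares_refl e : shares e e.
Proof. by rewrite /shares eqxx. Qed.

Definition matching M := pairwise (fun e f => ~~ shares e f) M.

Lemma ndisc_aux_cat pre s t : ndisc_aux pre s <= ndisc_aux pre (s ++ t).
Proof. by elim: s pre => [|e s IH] pre //=; rewrite leq_add2l. Qed.

Lemma ndisc_aux_matching pre M :
  {in M & pre, forall e f, ~~ shares e f} -> matching M ->
  ndisc_aux pre M = size M.
Proof.
elim: M pre => [|e M IH] pre //= Hpre /andP[He HM].
have -> : has (shares e) pre = false.
  by apply/hasP => -[f Hf]; apply/negP/Hpre; rewrite ?mem_head.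
rewrite IH // => g f Hg; rewrite mem_rcons inE => /predU1P[->|Hf].
  by rewrite shares_sym (allP He).
by apply: Hpre; rewrite // inE Hg orbT.
Qed.

Lemma ndisc_matching M : matching M -> ndisc M = size M.
Proof. exact: ndisc_aux_matching. Qed.

Definition incident (v : V) e := (v == e.1) || (v == e.2).

Definition other_end (v : V) e := if e.1 == v then e.2 else e.1.

Lemma incident_other_end v e :
  incident v e -> e = (v, other_end v e) \/ e = (other_end v e, v).
Proof.
case: e => a b; rewrite /incident /other_end /=.
by case: (eqVneq a v) => [->|_] /=; [left | move/eqP <-; right].
Qed.

Lemma same_edge_other_end v e f : incident v e -> incident v f ->
  other_end v e = other_end v f -> same_edge e f.
Proof.
move=> /incident_other_end + /incident_other_end + Eef; rewrite -Eef.
move: (other_end v e) => x; rewrite /same_edge.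
by case=> -> [] ->; rewrite /= ?eqxx ?orbT.
Qed.

Lemma uniq_other_end v s : pairwise (fun e f => ~~ same_edge e f) s ->
  uniq (map (other_end v) (filter (incident v) s)).
Proof.
elim: s => [|e s IH] //= /andP[He Hs].
case He_v: (incident v e) => /=; last exact: IH.
rewrite IH // andbT; apply/mapP => -[f]; rewrite mem_filter => /andP[Hf_v Hf].
by move/(same_edge_other_end He_v Hf_v); apply/negP/(allP He).
Qed.

Variables (adj : rel V) (d : nat).
Hypothesis adj_sym : symmetric adj.
Hypothesis deg_le : forall (v : V) (s : seq V), uniq s -> all (adj v) s -> size s <= d.

Definition edge_list s :=
  all (fun e => adj e.1 e.2) s && pairwise (fun e f => ~~ same_edge e f) s.

Lemma edge_list_cons e s :
  edge_list (e :: s) = [&& adj e.1 e.2, all (fun f => ~~ same_edge e f) s & edge_list s].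
Proof. by rewrite /edge_list /= -!andbA; do !bool_congr. Qed.

Lemma edge_list_filter (p : pred (V * V)) s : edge_list s -> edge_list (filter p s).
Proof.
case/andP=> Hadj Hs; rewrite /edge_list pairwise_filter // andbT.
by apply/allP => e; rewrite mem_filter => /andP[_ /(allP Hadj)].
Qed.

Lemma adj_other_end v e : adj e.1 e.2 -> incident v e -> adj v (other_end v e).
Proof.
move=> He /incident_other_end; move: (other_end v e) => x.
by case=> Ee; rewrite Ee /= in He; rewrite // adj_sym.
Qed.

Lemma count_incident v s : edge_list s -> count (incident v) s <= d.
Proof.
case/andP=> Hadj Hs; rewrite -size_filter -(size_map (other_end v)).
apply: deg_le; first exact: uniq_other_end.
apply/allP => x /mapP[e]; rewrite mem_filter => /andP[He_v He] ->.
exact: adj_other_end (allP Hadj e He) He_v.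
Qed.

(* e meets itself at both endpoints, hence the strict inequality. *)
Lemma count_shares_lt e s : e \in s -> edge_list s -> count (shares e) s < 2 * d.
Proof.
move=> He Hs.
have Hboth : 0 < count (predI (incident e.1) (incident e.2)) s.
  by rewrite -has_count; apply/hasP; exists e; rewrite //= /incident !eqxx orbT.
have -> : count (shares e) s = count (predU (incident e.1) (incident e.2)) s.
  by apply: eq_count => f; rewrite /shares /incident /= !orbA.
have := count_predUI (incident e.1) (incident e.2) s.
have := count_incident e.1 Hs; have := count_incident e.2 Hs; lia.
Qed.

Lemma greedy_matching s : edge_list s ->
  exists M t, [/\ perm_eq (M ++ t) s, matching M & size s <= 2 * d * size M].
Proof.
elim: {s}(size s).+1 {-2}s (ltnSn (size s)) => [|n IH] [|e s] //= Hn Hes.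
  by exists [::], [::].
set far := [seq f <- s | ~~ shares e f]; set near := [seq f <- s | shares e f].
have Hfar_size : size far < n by rewrite size_filter (leq_ltn_trans (count_size _ _)).
have Hs : edge_list s by move: Hes; rewrite edge_list_cons => /and3P[].
have [M [t [HMt HM Hsize]]] := IH far Hfar_size (edge_list_filter _ Hs).
exists (e :: M), (near ++ t); split.
- rewrite cat_cons perm_cons perm_catCA perm_sym -(perm_filterC (shares e) s).
  by rewrite perm_sym perm_cat2l.
- apply/andP; split=> //; apply/allP => f Hf.
  by have := perm_mem HMt f; rewrite mem_cat Hf mem_filter => /esym/andP[].
- have := count_shares_lt (mem_head e s) Hes; rewrite /= shares_refl add1n => Hnear.
  rewrite mulnS -(count_predC (shares e)) -addSn leq_add ?(ltnW Hnear) //.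
  by rewrite -size_filter.
Qed.
End Matchings.

Theorem lemma6p11 (V : eqType) (adj : rel V) (d : nat)
  (Hsym : symmetric adj) (Hirr : irreflexive adj)
  (* every vertex has at most d neighbours *)
  (Hdeg : forall (v : V) (s : seq V), uniq s -> all (adj v) s -> size s <= d)
  (* some vertex has exactly d neighbours: maximum degree is d *)
  (Hmax : exists (v : V) (s : seq V), [/\ uniq s, all (adj v) s & size s = d])
  (Hd : 1 <= d)
  (* E: a finite set of edges of G, listed without repetition *)
  (E : seq (V * V))
  (HE : all (fun e => adj e.1 e.2) E)
  (HEu : pairwise (fun e f => ~~ same_edge e f) E) :
  exists o : seq (V * V), perm_eq o E /\ size E %/ (2 * d) <= ndisc o.
Proof.
have HEedges : edge_list adj E by apply/andP.
have [M [t [HMt HM Hsize]]] := greedy_matching Hsym Hdeg HEedges.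
exists (M ++ t); split=> //.
rewrite (leq_trans _ (ndisc_aux_cat _ _ _)) // -/(ndisc M) ndisc_matching //.
by rewrite (leq_trans (leq_div2r _ Hsize)) // mulKn ?muln_gt0.
Qed.
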